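(* Let $m \le n$ and let $A \in \mathbb{R}^{m\times n}$ be a matrix with orthonormal rows. Let $b$ be a positive integer and let $A' \in \mathbb{R}^{m\times n}$ be obtained by rounding each entry of $A$ to $b$ bits, so that every entry of $A - A'$ has absolute value less than $2^{-b}$. Then for every $v \in \mathbb{R}^n$ there exists $s \in \mathbb{R}^n$ such that $A'v = A(v-s)$ and $\|s\|_2 \le n\,2^{-b}\,\|v\|_2$.
   Context: $\|\cdot\|_2$ denotes the Euclidean norm. *)

From mathcomp Require Import all_boot all_order all_algebra.
Set Implicit Arguments. Unset Strict Implicit. Unset Printing Implicit Defensive.
Import Order.TTheory GRing.Theory Num.Theory.
Local Open Scope ring_scope.

Definition norm2 (R : rcfType) (n : nat) (v : 'cV[R]_n) : R :=
  Num.sqrt (\sum_(i < n) v i 0 ^+ 2).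

From mathcomp Require Import all_boot all_order all_algebra.
From mathcomp Require Import lra ring.
Set Implicit Arguments. Unset Strict Implicit. Unset Printing Implicit Defensive.
Import Order.TTheory GRing.Theory Num.Theory.
Local Open Scope ring_scope.

(* Take s := A^T (A - A') v. As A A^T = 1, A s = (A - A') v, so A (v - s) = A' v; and
   A^T is an isometry, so |s| = |(A - A') v|. Cauchy-Schwarz on each row bounds this by
   the Frobenius norm of A - A' times |v|, and that Frobenius norm is at most
   sqrt(m n) 2^-b <= n 2^-b. *)

Section EuclideanNorm.
Variable R : rcfType.

Lemma sqr_sum_mul_le (n : nat) (a c : 'I_n -> R) :
  (\sum_i a i * c i) ^+ 2 <= (\sum_i a i ^+ 2) * (\sum_i c i ^+ 2).
Proof.
set S := \sum_i a i ^+ 2; set T := \sum_i c i ^+ 2; set P := \sum_i a i * c i.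
have ST : \sum_i \sum_j a i ^+ 2 * c j ^+ 2 = S * T.
  by rewrite mulr_suml; apply: eq_bigr => i _; rewrite mulr_sumr.
have PP : \sum_i \sum_j a i * c i * (a j * c j) = P ^+ 2.
  by rewrite expr2 mulr_suml; apply: eq_bigr => i _; rewrite mulr_sumr.
have lagrange : \sum_i \sum_j (a i * c j - a j * c i) ^+ 2 = 2 * (S * T - P ^+ 2).
  transitivity (\sum_i \sum_j (a i ^+ 2 * c j ^+ 2 + a j ^+ 2 * c i ^+ 2)
                - 2 * \sum_i \sum_j a i * c i * (a j * c j)).
    rewrite mulr_sumr -sumrB; apply: eq_bigr => i _.
    by rewrite mulr_sumr -sumrB; apply: eq_bigr => j _; ring.
  under eq_bigr do rewrite big_split.
  by rewrite big_split /= ST exchange_big /= ST PP; ring.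
have : 0 <= \sum_i \sum_j (a i * c j - a j * c i) ^+ 2.
  by do 2!apply: sumr_ge0 => ? _; rewrite sqr_ge0.
rewrite lagrange; lra.
Qed.

Lemma norm2_ge0 (n : nat) (v : 'cV[R]_n) : 0 <= norm2 v.
Proof. exact: sqrtr_ge0. Qed.

Lemma norm2E (n : nat) (v : 'cV[R]_n) : norm2 v = Num.sqrt ((v^T *m v) 0 0).
Proof. by rewrite /norm2 mxE; congr Num.sqrt; apply: eq_bigr => i _; rewrite mxE expr2. Qed.

Lemma norm2_trmx_mul (m n : nat) (A : 'M[R]_(m, n)) (w : 'cV[R]_m) :
  A *m A^T = 1%:M -> norm2 (A^T *m w) = norm2 w.
Proof. by move=> AAT; rewrite !norm2E trmx_mul trmxK mulmxA -(mulmxA _ A) AAT mulmx1. Qed.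

Definition frobenius_norm (m n : nat) (M : 'M[R]_(m, n)) : R :=
  Num.sqrt (\sum_i \sum_j M i j ^+ 2).

Lemma norm2_mulmx_le (m n : nat) (M : 'M[R]_(m, n)) (v : 'cV[R]_n) :
  norm2 (M *m v) <= frobenius_norm M * norm2 v.
Proof.
rewrite /norm2 /frobenius_norm -sqrtrM; last by do 2!apply: sumr_ge0 => ? _; rewrite sqr_ge0.
apply: ler_wsqrtr; rewrite mulr_suml; apply: ler_sum => i _.
by rewrite mxE sqr_sum_mul_le.
Qed.

Lemma frobenius_norm_le (m n : nat) (M : 'M[R]_(m, n)) (e : R) :
  0 <= e -> (forall i j, `|M i j| <= e) -> frobenius_norm M <= Num.sqrt (m * n)%:R * e.
Proof.
move=> e_ge0 Me; rewrite -(ger0_norm e_ge0) -sqrtr_sqr -sqrtrM ?ler0n //.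
apply: ler_wsqrtr; apply: (@le_trans _ _ (\sum_(i < m) \sum_(j < n) e ^+ 2)).
  apply: ler_sum => i _; apply: ler_sum => j _.
  by rewrite -real_normK ?num_real // lerXn2r ?nnegrE.
by rewrite !sumr_const !card_ord natrM -mulrA !mulr_natl.
Qed.

End EuclideanNorm.

Theorem mainTheorem1 (R : rcfType) (m n : nat) (hmn : (m <= n)%N)
  (A : 'M[R]_(m, n)) (hA : A *m A^T = 1%:M)
  (b : nat) (hb : (0 < b)%N)
  (A' : 'M[R]_(m, n)) (hA' : forall i j, `|A i j - A' i j| < 2 ^- b) :
  forall v : 'cV[R]_n, exists s : 'cV[R]_n,
    A' *m v = A *m (v - s) /\ norm2 s <= n%:R * 2 ^- b * norm2 v.
Proof.
move=> v; exists (A^T *m ((A - A') *m v)); split.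
  by rewrite mulmxBr (mulmxA A A^T) hA mul1mx mulmxBl opprB addrC subrK.
have e_ge0 : 0 <= 2 ^- b :> R by rewrite invr_ge0 exprn_ge0.
have entry_le : forall i j, `|(A - A') i j| <= 2 ^- b by move=> i j; rewrite !mxE ltW.
have sqrt_mn_le : Num.sqrt (m * n)%:R <= n%:R :> R.
  rewrite -[X in _ <= X]ger0_norm ?ler0n // -sqrtr_sqr ler_wsqrtr //.
  by rewrite -natrX ler_nat leq_mul2r hmn orbT.
rewrite norm2_trmx_mul // (le_trans (norm2_mulmx_le _ _)) // ler_wpM2r ?norm2_ge0 //.
by rewrite (le_trans (frobenius_norm_le e_ge0 entry_le)) // ler_wpM2r.
Qed.
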